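(* Let $H$ be a graph such that $L(H)$ satisfies the Abu-Khzam–Langston property, i.e. for every positive integer $t$, $\chi(L(H))\geq t$ implies that $L(H)$ has a $K_t$-immersion. Then for every integer $m\geq 2$, $L(mH)$ also satisfies this property: for every positive integer $t$, $\chi(L(mH))\geq t$ implies that $L(mH)$ has a $K_t$-immersion.
   Context: Graphs are finite and may have parallel edges but no loops. $\chi$ denotes the chromatic number. The line graph $L(H)$ of a graph $H$ is the simple graph whose vertex set is $E(H)$, in which two distinct edges of $H$ are adjacent iff they share at least one endpoint. For $m\geq 2$, $mH$ denotes the graph obtained from $H$ by replacing each edge $e$ by $m$ parallel copies of $e$. A graph $G$ has a $K_t$-immersion if there is an injective map $\phi$ from the vertex set of $K_t$ to $V(G)$ and, for each pair $u\neq v$ of vertices of $K_t$, a path in $G$ joining $\phi(u)$ and $\phi(v)$, such that these paths are pairwise edge-disjoint. *)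

From mathcomp Require Import all_boot.
Set Implicit Arguments. Unset Strict Implicit. Unset Printing Implicit Defensive.

(* A (finite, loopless) multigraph H is given by finite types V (vertices) and
   E (edges) and endpoint maps src tgt : E -> V with src e != tgt e.
   Parallel edges are allowed (distinct edges may have the same endpoints). *)

Definition line_graph (V E : finType) (src tgt : E -> V) : rel E :=
  fun e f => (e != f) &&
    [|| src e == src f, src e == tgt f, tgt e == src f | tgt e == tgt f].

(* mH: each edge e replaced by m parallel copies (e, i), i < m. *)
Definition mult_src (V E : finType) (m : nat) (src : E -> V) : E * 'I_m -> V :=
  fun x => src x.1.
Arguments mult_src {V E} m src _.

(* Simple graphs: symmetric irreflexive relations on a finType. *)
Definition colorable (T : finType) (G : rel T) (k : nat) : bool :=
  [exists c : {ffun T -> 'I_k}, [forall x, forall y, G x y ==> (c x != c y)]].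

Lemma colorable_card (T : finType) (G : rel T) :
  (forall x, ~~ G x x) -> exists k, colorable G k.
Proof.
move=> irr; exists #|T|; apply/existsP; exists [ffun x => enum_rank x].
apply/forallP => x; apply/forallP => y; apply/implyP => Gxy.
rewrite !ffunE; apply/negP => /eqP /enum_rank_inj exy.
by move: Gxy; rewrite exy (negbTE (irr y)).
Qed.

(* Chromatic number: least k admitting a proper k-colouring
   (the relation is assumed irreflexive; otherwise defined as 0). *)
Definition chi (T : finType) (G : rel T) : nat :=
  match boolP [forall x, ~~ G x x] with
  | AltTrue h => ex_minn (colorable_card (fun x => (forallP h) x))
  | AltFalse _ => 0
  end.

Definition uses_edge (T : eqType) (x : T) (p : seq T) (a b : T) : bool :=
  ((a, b) \in zip (x :: p) p) || ((b, a) \in zip (x :: p) p).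

Definition has_K_immersion (T : finType) (G : rel T) (t : nat) : Prop :=
  exists (phi : 'I_t -> T) (P : 'I_t -> 'I_t -> seq T),
    injective phi /\
    (forall u v : 'I_t, u < v ->
       [/\ path G (phi u) (P u v), last (phi u) (P u v) = phi v
         & uniq (phi u :: P u v)]) /\
    (forall u v u' v' : 'I_t, u < v -> u' < v' -> (u, v) != (u', v') ->
       forall a b, uses_edge (phi u) (P u v) a b ->
                   ~~ uses_edge (phi u') (P u' v') a b).

Definition AKL_property (T : finType) (G : rel T) : Prop :=
  forall t : nat, 0 < t -> t <= chi G -> has_K_immersion G t.

(* Colouring the copy (e, i) of e by (c e, i) shows chi(L(mH)) <= m chi(L(H)),
   so t <= chi(L(mH)) gives t <= c m with c := chi(L(H)), and L(H) has a
   K_c-immersion (phi, P).  Split the t branch vertices into c blocks of size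
   at most m and send u to the copy (u mod m) of phi (u div m).  Two vertices of
   one block are adjacent in L(mH).  For vertices in different blocks, lift the
   path P of their blocks, walking through the copies i, i+j, i, i+j, ..., j
   (mod m), where i and j are the copies of the two ends.  Lifts of different
   paths are edge-disjoint because their projections are; lifts of the same
   path are, because two consecutive copy indices determine (i, j). *)

From mathcomp Require Import all_boot zify.
Set Implicit Arguments. Unset Strict Implicit. Unset Printing Implicit Defensive.

Section Trail.
Variable T : Type.
Implicit Types (q : nat -> T) (k l : nat).

(* The walk q 0, q 1, ..., q k, in the head/tail form used by [path] and [uses_edge]. *)
Definition trail q k : seq T := behead (mkseq q k.+1).

Lemma trail_cons q k : q 0 :: trail q k = mkseq q k.+1.
Proof. by []. Qed.

Lemma size_trail q k : size (trail q k) = k.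
Proof. by rewrite size_behead size_mkseq. Qed.

Lemma nth_trail x0 q k l : l < k -> nth x0 (trail q k) l = q l.+1.
Proof. by move=> lk; rewrite nth_behead nth_mkseq. Qed.

Lemma nth_cons_trail x0 q k l : l <= k -> nth x0 (q 0 :: trail q k) l = q l.
Proof. by move=> lk; rewrite trail_cons nth_mkseq. Qed.

Lemma trail_nth (x : T) (p : seq T) : trail (nth x (x :: p)) (size p) = p.
Proof. by rewrite /trail (mkseq_nth x (x :: p)). Qed.

Lemma last_trail q k : last (q 0) (trail q k) = q k.
Proof. by rewrite (last_nth (q 0)) size_trail nth_cons_trail. Qed.

Lemma trail_pathP (r : rel T) q k :
  reflect (forall l, l < k -> r (q l) (q l.+1)) (path r (q 0) (trail q k)).
Proof.
apply: (iffP (pathP (q 0))); rewrite size_trail => h l lk; move: (h l lk);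
  by rewrite nth_cons_trail ?nth_trail // ltnW.
Qed.

End Trail.

Section TrailEdges.
Variable T : eqType.
Implicit Types (q : nat -> T) (k l : nat) (a b : T).

Lemma trail_uniqP q k : reflect {in gtn k.+1 &, injective q} (uniq (q 0 :: trail q k)).
Proof. by rewrite trail_cons; apply: mkseq_uniqP. Qed.

Lemma mem_zip_trailP q k a b :
  reflect (exists2 l, l < k & (a, b) = (q l, q l.+1))
          ((a, b) \in zip (q 0 :: trail q k) (trail q k)).
Proof.
have sz : size (zip (q 0 :: trail q k) (trail q k)) = k.
  by rewrite size_zip /= size_trail; apply/minn_idPr.
have nth_zip l : l < k -> nth (a, b) (zip (q 0 :: trail q k) (trail q k)) l = (q l, q l.+1).
  by move=> lk; rewrite nth_zip_cond sz lk /= nth_cons_trail ?nth_trail // ltnW.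
apply: (iffP (nthP (a, b))); rewrite sz => -[l lk e]; exists l => //.
  by rewrite -e nth_zip.
by rewrite nth_zip.
Qed.

Lemma trail_uses_edgeP q k a b :
  uses_edge (q 0) (trail q k) a b <->
  exists2 l, l < k & (a, b) = (q l, q l.+1) \/ (b, a) = (q l, q l.+1).
Proof.
split; first by case/orP => /mem_zip_trailP [l lk e]; exists l; auto.
by case=> l lk [e|e]; apply/orP; [left|right]; apply/mem_zip_trailP; exists l.
Qed.

Lemma trail_uses_edge_neq q k a b :
  {in gtn k.+1 &, injective q} -> uses_edge (q 0) (trail q k) a b -> a != b.
Proof.
move=> qinj /trail_uses_edgeP [l lk [[-> ->]|[-> ->]]]; apply/eqP => /qinj.
  by move=> /(_ (ltnW lk) lk) /n_Sn.
by move=> /(_ lk (ltnW lk)) /esym /n_Sn.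
Qed.

Lemma trail_shared_edge (S : eqType) (f : T -> S) q q' k a b :
  {in gtn k.+1 &, injective (f \o q)} -> f \o q =1 f \o q' ->
  uses_edge (q 0) (trail q k) a b -> uses_edge (q' 0) (trail q' k) a b ->
  exists2 l, l < k & q l = q' l /\ q l.+1 = q' l.+1.
Proof.
move=> finj fq /trail_uses_edgeP [l lk o] /trail_uses_edgeP [l' lk' o'].
have idx n n' : n <= k -> n' <= k -> q n = q' n' -> n = n'.
  by move=> nk n'k e; apply: finj; rewrite ?inE ?ltnS // /= e; exact/esym/fq.
have [lk1 lk1'] := (ltnW lk, ltnW lk').
case: o o' => -[-> ->] [] [e1 e2].
- by have ll' := idx _ _ lk1 lk1' e1; subst l'; exists l.
- by have := idx _ _ lk1 lk' e2; have := idx _ _ lk lk1' e1; lia.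
- by have := idx _ _ lk1 lk' e2; have := idx _ _ lk lk1' e1; lia.
- by have ll' := idx _ _ lk1 lk1' e1; subst l'; exists l.
Qed.

Lemma uses_edge1 (x y a b : T) :
  uses_edge x [:: y] a b = ((a, b) == (x, y)) || ((b, a) == (x, y)).
Proof. by rewrite /uses_edge /= !mem_seq1. Qed.

End TrailEdges.

Lemma uses_edge_trail_map (T S : eqType) (f : T -> S) (q : nat -> T) k a b :
  uses_edge (q 0) (trail q k) a b ->
  uses_edge (f (q 0)) (trail (f \o q) k) (f a) (f b).
Proof.
case/trail_uses_edgeP => l lk o; apply/(trail_uses_edgeP (f \o q) k (f a) (f b)).
by exists l => //=; case: o => -[-> ->]; auto.
Qed.

Section AltCopy.
Variables (m : nat) (m_gt0 : 0 < m).

Definition alt_copy (k : nat) (i j : 'I_m) (l : nat) : 'I_m :=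
  if l == 0 then i else if l == k then j
  else if odd l then Ordinal (ltn_pmod (i + j) m_gt0) else i.

Lemma alt_copy_last k i j : 0 < k -> alt_copy k i j k = j.
Proof. by rewrite /alt_copy eqxx; case: eqP => // ->. Qed.

Lemma alt_copy_inj k i j i' j' l : l < k ->
  alt_copy k i j l = alt_copy k i' j' l ->
  alt_copy k i j l.+1 = alt_copy k i' j' l.+1 -> i = i' /\ j = j'.
Proof.
have addIl (x y y' : 'I_m) :
    Ordinal (ltn_pmod (x + y) m_gt0) = Ordinal (ltn_pmod (x + y') m_gt0) -> y = y'.
  by move=> /(congr1 val) /eqP /=; rewrite eqn_modDl !modn_small // => /eqP /val_inj.
have addIr (x x' y : 'I_m) :
    Ordinal (ltn_pmod (x + y) m_gt0) = Ordinal (ltn_pmod (x' + y) m_gt0) -> x = x'.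
  by move=> /(congr1 val) /eqP /=; rewrite eqn_modDr !modn_small // => /eqP /val_inj.
rewrite /alt_copy => lk; case: l lk => [|l] lk /=.
  by move=> <-; case: eqP => _ /= e; split=> //; apply: addIl e.
rewrite (ltn_eqF lk); case: eqP => _.
  move=> + jj'; subst j'.
  by case: (odd l) => /= e; split=> //; apply: addIr e.
case: (odd l) => /= e1 e2.
  by subst i'; rewrite (addIl _ _ _ e2).
by subst i'; rewrite (addIl _ _ _ e1).
Qed.

End AltCopy.

Lemma chi_spec (T : finType) (G : rel T) : (forall x, ~~ G x x) ->
  colorable G (chi G) /\ forall k, colorable G k -> chi G <= k.
Proof.
move=> irr; rewrite /chi; destruct (boolP [forall x, ~~ G x x]) as [h|h].
  by case: ex_minnP.
by move/forallP: h.
Qed.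

Lemma colorable_fin (T C : finType) (G : rel T) (c : T -> C) :
  (forall x y, G x y -> c x != c y) -> colorable G #|C|.
Proof.
move=> proper; apply/existsP; exists [ffun x => enum_rank (c x)].
apply/forallP => x; apply/forallP => y; apply/implyP => /proper.
by rewrite !ffunE; apply: contra => /eqP /enum_rank_inj ->.
Qed.

Lemma line_graph_irr (V E : finType) (src tgt : E -> V) e : ~~ line_graph src tgt e e.
Proof. by rewrite /line_graph eqxx. Qed.

Lemma line_graph_neq (V E : finType) (src tgt : E -> V) e f :
  line_graph src tgt e f -> e != f.
Proof. by case/andP. Qed.

Section LineGraphMult.
Variables (V E : finType) (src tgt : E -> V) (m : nat).
Local Notation G := (line_graph src tgt).
Local Notation G' := (line_graph (mult_src m src) (mult_src m tgt)).

Lemma line_graph_mult x y : G' x y = (x != y) && ((x.1 == y.1) || G x.1 y.1).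
Proof.
by rewrite /line_graph /mult_src; case: (eqVneq x.1 y.1) => [->|_] //=; rewrite eqxx.
Qed.

Lemma chi_line_graph_mult : chi G' <= chi G * m.
Proof.
have [colG _] := chi_spec (line_graph_irr src tgt).
have [_ minG'] := chi_spec (line_graph_irr (mult_src m src) (mult_src m tgt)).
case/existsP: colG => c /forallP proper; apply: minG'.
have := @colorable_fin _ _ G' (fun x => (c x.1, x.2)).
rewrite card_prod !card_ord; apply=> -[e a] [f b].
rewrite line_graph_mult /= !xpair_eqE => /andP [neq /orP [/eqP ef|Gef]].
  by move: neq; rewrite ef !eqxx.
by move/forallP: (proper e) => /(_ f) /implyP /(_ Gef) /negbTE ->.
Qed.

End LineGraphMult.

Section ImmersionMult.
Variables (V E : finType) (src tgt : E -> V) (m s t : nat).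
Hypotheses (m_gt0 : 0 < m) (t_le : t <= s * m).
Local Notation G := (line_graph src tgt).
Local Notation G' := (line_graph (mult_src m src) (mult_src m tgt)).
Variables (phi : 'I_s -> E) (P : 'I_s -> 'I_s -> seq E).
Hypothesis phi_inj : injective phi.
Hypothesis P_walk : forall i j : 'I_s, i < j ->
  [/\ path G (phi i) (P i j), last (phi i) (P i j) = phi j & uniq (phi i :: P i j)].
Hypothesis P_disj : forall i j i' j' : 'I_s, i < j -> i' < j' -> (i, j) != (i', j') ->
  forall a b, uses_edge (phi i) (P i j) a b -> ~~ uses_edge (phi i') (P i' j') a b.

Implicit Types (u v : 'I_t) (i j : 'I_s).

Lemma block_subproof (u : 'I_t) : u %/ m < s.
Proof. by rewrite ltn_divLR // (leq_trans (ltn_ord u) t_le). Qed.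

Definition block (u : 'I_t) : 'I_s := Ordinal (block_subproof u).
Definition copy (u : 'I_t) : 'I_m := Ordinal (ltn_pmod u m_gt0).
Definition lift_vertex (u : 'I_t) : E * 'I_m := (phi (block u), copy u).

Lemma block_copy_inj u v : block u = block v -> copy u = copy v -> u = v.
Proof.
move=> /(congr1 val) /= eb /(congr1 val) /= ec; apply: val_inj.
by rewrite /= (divn_eq u m) (divn_eq v m) eb ec.
Qed.

Lemma lift_vertex_inj : injective lift_vertex.
Proof.
move=> u v e; apply: block_copy_inj; last exact: (congr1 snd e).
exact: phi_inj (congr1 fst e).
Qed.

Lemma block_mono u v : u <= v -> block u <= block v.
Proof. exact: leq_div2r. Qed.

Lemma block_lt u v : u < v -> block u != block v -> block u < block v.
Proof. by move=> uv; rewrite ltn_neqAle => ->; exact: block_mono (ltnW uv). Qed.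

Definition walk (i j : 'I_s) : nat -> E := nth (phi i) (phi i :: P i j).
Definition walk_len (i j : 'I_s) : nat := size (P i j).

Lemma walk_trail i j : trail (walk i j) (walk_len i j) = P i j.
Proof. exact: trail_nth. Qed.

Lemma walkP i j : i < j ->
  [/\ 0 < walk_len i j,
      forall l, l < walk_len i j -> G (walk i j l) (walk i j l.+1),
      walk i j (walk_len i j) = phi j
    & {in gtn (walk_len i j).+1 &, injective (walk i j)}].
Proof.
move=> ij; have [] := P_walk ij; rewrite -walk_trail.
move=> /(trail_pathP G (walk i j)) adj; rewrite last_trail => lst.
move=> /(trail_uniqP (walk i j)) inj; split=> //.
rewrite lt0n; apply: contraTneq ij => k0.
by move: lst; rewrite k0 => /phi_inj ->; rewrite ltnn.
Qed.

Definition lift_walk (u v : 'I_t) (l : nat) : E * 'I_m :=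
  (walk (block u) (block v) l,
   alt_copy m_gt0 (walk_len (block u) (block v)) (copy u) (copy v) l).

Definition lift_path (u v : 'I_t) : seq (E * 'I_m) :=
  if block u == block v then [:: lift_vertex v]
  else trail (lift_walk u v) (walk_len (block u) (block v)).

Lemma lift_path_cross u v : block u < block v ->
  lift_path u v = trail (lift_walk u v) (walk_len (block u) (block v)).
Proof. by move=> buv; rewrite /lift_path ifF //; apply: ltn_eqF. Qed.

Lemma lift_walk_last u v : block u < block v ->
  lift_walk u v (walk_len (block u) (block v)) = lift_vertex v.
Proof.
by move=> buv; have [k0 _ lst _] := walkP buv; rewrite /lift_walk lst alt_copy_last.
Qed.

Lemma lift_path_spec u v : u < v ->
  [/\ path G' (lift_vertex u) (lift_path u v),
      last (lift_vertex u) (lift_path u v) = lift_vertex v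
    & uniq (lift_vertex u :: lift_path u v)].
Proof.
move=> uv; have neq : lift_vertex u != lift_vertex v.
  by apply: contraTneq uv => /lift_vertex_inj ->; rewrite ltnn.
case: (eqVneq (block u) (block v)) => [buv | /(block_lt uv) buv].
  by rewrite /lift_path buv eqxx /= line_graph_mult neq /= buv eqxx /= mem_seq1 neq.
rewrite lift_path_cross //.
have [_ adj _ inj] := walkP buv.
rewrite -[lift_vertex u]/(lift_walk u v 0); split.
- apply/trail_pathP => l lk; rewrite line_graph_mult adj // orbT andbT.
  by apply: contra_neq (line_graph_neq (adj l lk)) => -[].
- by rewrite last_trail lift_walk_last.
- by apply/trail_uniqP => l l' hl hl' /(congr1 fst); apply: inj.
Qed.

Lemma lift_path_same_edge u v a b : block u = block v ->
  uses_edge (lift_vertex u) (lift_path u v) a b ->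
  ((a, b) == (lift_vertex u, lift_vertex v)) || ((b, a) == (lift_vertex u, lift_vertex v)).
Proof. by move=> buv; rewrite /lift_path buv eqxx uses_edge1. Qed.

Lemma same_block_edge_fst u v a b : block u = block v ->
  uses_edge (lift_vertex u) (lift_path u v) a b -> a.1 = b.1.
Proof. by move=> buv /(lift_path_same_edge buv) /orP [] /eqP [-> ->] /=; rewrite buv. Qed.

Lemma lift_path_cross_edge u v a b : block u < block v ->
  uses_edge (lift_vertex u) (lift_path u v) a b ->
  uses_edge (phi (block u)) (P (block u) (block v)) a.1 b.1.
Proof.
move=> buv; rewrite lift_path_cross // -walk_trail -[lift_vertex u]/(lift_walk u v 0).
exact: (uses_edge_trail_map fst).
Qed.

Lemma cross_block_edge_fst u v a b : block u < block v ->
  uses_edge (lift_vertex u) (lift_path u v) a b -> a.1 != b.1.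
Proof.
move=> buv /(lift_path_cross_edge buv); rewrite -walk_trail.
have [_ _ _ inj] := walkP buv; exact: trail_uses_edge_neq inj.
Qed.

Lemma same_block_edges u v u' v' a b : u < v -> u' < v' ->
  block u = block v -> block u' = block v' ->
  uses_edge (lift_vertex u) (lift_path u v) a b ->
  uses_edge (lift_vertex u') (lift_path u' v') a b ->
  (u, v) = (u', v').
Proof.
move=> + + buv buv' /(lift_path_same_edge buv) e /(lift_path_same_edge buv') e'.
case/orP: e e' => /eqP [-> ->] /orP [] /eqP /pair_equal_spec
  [/lift_vertex_inj -> /lift_vertex_inj ->] // lt1 lt2;
  by have := ltn_trans lt1 lt2; rewrite ltnn.
Qed.

Lemma cross_block_edges u v u' v' a b : block u < block v ->
  block u = block u' -> block v = block v' ->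
  uses_edge (lift_vertex u) (lift_path u v) a b ->
  uses_edge (lift_vertex u') (lift_path u' v') a b ->
  (u, v) = (u', v').
Proof.
move=> buv bu bv; have buv' : block u' < block v' by rewrite -bu -bv.
have [_ _ _ inj] := walkP buv.
have same_walk : fst \o lift_walk u v =1 fst \o lift_walk u' v'.
  by move=> l; rewrite /= /lift_walk /= bu bv.
rewrite !lift_path_cross // -bu -bv.
rewrite -[lift_vertex u]/(lift_walk u v 0) -[lift_vertex u']/(lift_walk u' v' 0) => e e'.
have [l lk [/(congr1 snd) c1 /(congr1 snd) c2]] :=
  trail_shared_edge (f := fst) (q := lift_walk u v) inj same_walk e e'.
move: c1 c2; rewrite /lift_walk /= -bu -bv => c1 c2.
have [cu cv] := alt_copy_inj lk c1 c2.
by rewrite (block_copy_inj bu cu) (block_copy_inj bv cv).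
Qed.

Lemma lift_path_disjoint u v u' v' : u < v -> u' < v' -> (u, v) != (u', v') ->
  forall a b, uses_edge (lift_vertex u) (lift_path u v) a b ->
    ~~ uses_edge (lift_vertex u') (lift_path u' v') a b.
Proof.
move=> uv uv' neq a b e; apply/negP => e'; move/eqP: neq; apply.
case: (eqVneq (block u) (block v)) => [buv|/(block_lt uv) buv];
  case: (eqVneq (block u') (block v')) => [buv'|/(block_lt uv') buv'].
- exact: same_block_edges e e'.
- by move: (cross_block_edge_fst buv' e'); rewrite (same_block_edge_fst buv e) eqxx.
- by move: (cross_block_edge_fst buv e); rewrite (same_block_edge_fst buv' e') eqxx.
case: (eqVneq (block u, block v) (block u', block v')) => [/pair_equal_spec [bu bv]|nb].
  exact: cross_block_edges bu bv e e'.
have := P_disj buv buv' nb (lift_path_cross_edge buv e).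
by rewrite (lift_path_cross_edge buv' e').
Qed.

Lemma lift_immersion : has_K_immersion G' t.
Proof.
exists lift_vertex, lift_path; split; first exact: lift_vertex_inj.
by split; [exact: lift_path_spec | exact: lift_path_disjoint].
Qed.

End ImmersionMult.

Lemma has_K_immersion_mult (V E : finType) (src tgt : E -> V) m s t :
  0 < m -> t <= s * m -> has_K_immersion (line_graph src tgt) s ->
  has_K_immersion (line_graph (mult_src m src) (mult_src m tgt)) t.
Proof.
move=> m0 tle [phi [P [inj [walks disj]]]].
exact: (lift_immersion m0 tle inj walks disj).
Qed.

Theorem corollary1p3 (V E : finType) (src tgt : E -> V)
    (loopless : forall e, src e != tgt e) :
  AKL_property (line_graph src tgt) ->
  forall m : nat, 2 <= m ->
    AKL_property (line_graph (mult_src m src) (mult_src m tgt)).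
Proof.
move=> AKL m m2 t t0 tchi.
have m0 : 0 < m by apply: leq_trans m2.
have tcm : t <= chi (line_graph src tgt) * m.
  exact: leq_trans tchi (chi_line_graph_mult src tgt m).
have c0 : 0 < chi (line_graph src tgt).
  by move: (leq_trans t0 tcm); rewrite muln_gt0 => /andP [].
exact: has_K_immersion_mult m0 tcm (AKL _ c0 (leqnn _)).
Qed.
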